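(* Let $C_1,C_2\subseteq\mathbb{R}^d$ be convex polyhedral sets with $C_1\cap C_2\neq\emptyset$. Then there exists a constant $M>0$ such that for all $x\in C_1$ and $y\in C_2$, $$\Big\|\mathrm{proj}_{C_1}(x)+\mathrm{proj}_{C_2}(y)-2\,\mathrm{proj}_{C_1\cap C_2}\Big(\frac{x+y}{2}\Big)\Big\|\le M\,\|\mathrm{proj}_{C_1}(x)-\mathrm{proj}_{C_2}(y)\|.$$
   Context: $\|\cdot\|$ is the Euclidean norm and $\mathrm{proj}_C(z)=\arg\min_{u\in C}\|z-u\|$ is the Euclidean projection onto a nonempty closed convex set $C$. A convex polyhedral set is a finite intersection of closed half-spaces. *)

From HB Require Import structures.
From mathcomp Require Import all_boot all_order all_algebra.
From mathcomp Require Import reals.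
Set Implicit Arguments. Unset Strict Implicit. Unset Printing Implicit Defensive.
Import Order.TTheory GRing.Theory Num.Theory.
Local Open Scope ring_scope.

Definition enorm (R : realType) (d : nat) (v : 'cV[R]_d) : R :=
  Num.sqrt (\sum_(i < d) v i 0 ^+ 2).

Definition polyhedral (R : realType) (d : nat) (C : 'cV[R]_d -> Prop) : Prop :=
  exists (m : nat) (A : 'M[R]_(m, d)) (b : 'cV[R]_m),
    forall x, C x <-> (forall i : 'I_m, (A *m x) i 0 <= b i 0).

Definition is_proj (R : realType) (d : nat) (C : 'cV[R]_d -> Prop)
    (z p : 'cV[R]_d) : Prop :=
  C p /\ forall u, C u -> enorm (z - p) <= enorm (z - u).

From HB Require Import structures.
From mathcomp Require Import all_boot all_order all_algebra.
From mathcomp Require Import reals ring lra.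
From Stdlib Require Import Classical.
Set Implicit Arguments. Unset Strict Implicit. Unset Printing Implicit Defensive.
Import Order.TTheory GRing.Theory Num.Theory.
Local Open Scope ring_scope.

(* Since x lies in C1 and y in C2, the projections p1, p2 are x and y
   themselves, and the claim says that the midpoint (x + y)/2 is within
   O(|x - y|) of C1 /\ C2.  By Hoffman's error bound, the distance from a point
   to a polyhedron {u | a_i . u <= b_i} is at most a constant times the total
   violation sum_i max(0, a_i . u - b_i).  The constraints of C1 are violated at
   the midpoint by at most |a_i| |x - y| / 2 because x satisfies them, and
   likewise for C2 with y.

   Hoffman's bound is proved by induction on the constraints, with a constant
   depending on the normals a_i only: a violated inequality is replaced by an
   equality (the segment from the current point to a feasible point crosses its
   boundary), and an equality is either enforced by moving along a direction in
   the kernel of the other normals or is already implied by them.  All estimates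
   use the l1 norm, which is equivalent to the Euclidean one. *)

Section HoffmanBound.

Variables (R : realType) (d : nat).
Local Notation vec := 'cV[R]_d.
Implicit Types (a b e u v w z : vec) (k : R) (c : vec * R) (I E : seq (vec * R)).

Definition dotv a v : R := \sum_i a i 0 * v i 0.
Definition norm1 v : R := \sum_i `|v i 0|.

Lemma dotvD a u v : dotv a (u + v) = dotv a u + dotv a v.
Proof. by rewrite /dotv -big_split; apply: eq_bigr => i _; rewrite mxE mulrDr. Qed.

Lemma dotvZ a k v : dotv a (k *: v) = k * dotv a v.
Proof. by rewrite /dotv mulr_sumr; apply: eq_bigr => i _; rewrite mxE mulrCA. Qed.

Lemma dotvB a u v : dotv a (u - v) = dotv a u - dotv a v.
Proof. by rewrite dotvD -scaleN1r dotvZ mulN1r. Qed.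

Lemma dotv_comb a l v w :
  dotv a ((1 - l) *: v + l *: w) = (1 - l) * dotv a v + l * dotv a w.
Proof. by rewrite dotvD !dotvZ. Qed.

Lemma norm1_ge0 v : 0 <= norm1 v.
Proof. exact: sumr_ge0. Qed.

Lemma norm10 : norm1 0 = 0.
Proof. by rewrite /norm1 big1 // => i _; rewrite mxE normr0. Qed.

Lemma norm1D u v : norm1 (u + v) <= norm1 u + norm1 v.
Proof. by rewrite /norm1 -big_split ler_sum // => i _; rewrite mxE ler_normD. Qed.

Lemma norm1Z k v : norm1 (k *: v) = `|k| * norm1 v.
Proof. by rewrite /norm1 mulr_sumr; apply: eq_bigr => i _; rewrite mxE normrM. Qed.

Lemma norm1_distC u v : norm1 (u - v) = norm1 (v - u).
Proof. by rewrite -opprB -scaleN1r norm1Z normrN1 mul1r. Qed.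

Lemma coord_le_norm1 v i : `|v i 0| <= norm1 v.
Proof. by rewrite /norm1 (bigD1 i) //= lerDl sumr_ge0. Qed.

Lemma dotv_lipschitz a u v : `|dotv a u - dotv a v| <= norm1 a * norm1 (u - v).
Proof.
rewrite -dotvB; apply: le_trans (ler_norm_sum _ _ _) _.
rewrite /norm1 mulr_suml; apply: ler_sum => i _.
by rewrite normrM ler_wpM2l // coord_le_norm1.
Qed.

Lemma enorm_ge0 v : 0 <= enorm v.
Proof. exact: sqrtr_ge0. Qed.

Lemma enormZ k v : enorm (k *: v) = `|k| * enorm v.
Proof.
rewrite /enorm -sqrtr_sqr -sqrtrM ?sqr_ge0 // mulr_sumr.
by congr Num.sqrt; apply: eq_bigr => i _; rewrite mxE exprMn.
Qed.

Lemma enorm_le_norm1 v : enorm v <= norm1 v.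
Proof.
rewrite /enorm -(ger0_norm (norm1_ge0 v)) -sqrtr_sqr ler_sqrt ?sqr_ge0 //.
rewrite expr2 {2}/norm1 mulr_suml; apply: ler_sum => i _.
by rewrite -real_normK ?num_real // expr2 ler_wpM2l // coord_le_norm1.
Qed.

Lemma norm1_le_enorm v : norm1 v <= d%:R * enorm v.
Proof.
rewrite /norm1 -[d in d%:R]card_ord mulr_natl -sumr_const; apply: ler_sum => i _.
rewrite /enorm -sqrtr_sqr ler_wsqrtr // (bigD1 i) //= lerDl.
by apply: sumr_ge0 => j _; apply: sqr_ge0.
Qed.

Lemma enorm_le0 v : enorm v <= 0 -> v = 0.
Proof.
move=> v_le0; have norm1_le0 : norm1 v <= 0.
  by apply: le_trans (norm1_le_enorm v) _; rewrite mulr_ge0_le0.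
apply/matrixP => i j; rewrite (ord1 j) mxE; apply/eqP; rewrite -normr_le0.
exact: le_trans (coord_le_norm1 v i) norm1_le0.
Qed.

Lemma is_proj_id (C : vec -> Prop) z p : C z -> is_proj C z p -> p = z.
Proof.
move=> Cz [_ pmin]; apply/esym/eqP; rewrite -subr_eq0; apply/eqP/enorm_le0.
apply: le_trans (pmin z Cz) _.
by rewrite subrr /enorm big1 ?sqrtr0 // => i _; rewrite mxE expr0n.
Qed.

Lemma is_proj_ext (C C' : vec -> Prop) z p :
  (forall u, C u <-> C' u) -> is_proj C z p -> is_proj C' z p.
Proof. by move=> CC' [Cp pmin]; split=> [|u /CC' Cu]; [apply/CC' | apply: pmin]. Qed.

Definition sat_le I v := all (fun c => dotv c.1 v <= c.2) I.
Definition sat_eq E v := all (fun c => dotv c.1 v == c.2) E.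
Definition res_le I u := \sum_(c <- I) Num.max 0 (dotv c.1 u - c.2).
Definition res_eq E u := \sum_(c <- E) `|dotv c.1 u - c.2|.

Lemma sat_le_cons c I v : sat_le (c :: I) v = (dotv c.1 v <= c.2) && sat_le I v.
Proof. by []. Qed.

Lemma sat_eq_cons c E v : sat_eq (c :: E) v = (dotv c.1 v == c.2) && sat_eq E v.
Proof. by []. Qed.

Lemma sat_le_cat I1 I2 v : sat_le (I1 ++ I2) v = sat_le I1 v && sat_le I2 v.
Proof. exact: all_cat. Qed.

Lemma res_le_ge0 I u : 0 <= res_le I u.
Proof. by apply: sumr_ge0 => c _; rewrite le_max lexx. Qed.

Lemma res_eq_ge0 E u : 0 <= res_eq E u.
Proof. exact: sumr_ge0. Qed.

Lemma res_le_cons c I u :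
  res_le (c :: I) u = Num.max 0 (dotv c.1 u - c.2) + res_le I u.
Proof. exact: big_cons. Qed.

Lemma res_eq_cons c E u : res_eq (c :: E) u = `|dotv c.1 u - c.2| + res_eq E u.
Proof. exact: big_cons. Qed.

Lemma res_le0 I v : sat_le I v -> res_le I v = 0.
Proof.
move=> /allP vI; rewrite /res_le big_seq big1 // => c /vI.
by rewrite -subr_le0 => /max_idPl.
Qed.

Lemma res_eq0 E v : sat_eq E v -> res_eq E v = 0.
Proof.
by move=> /allP vE; rewrite /res_eq big_seq big1 // => c /vE/eqP->; rewrite subrr normr0.
Qed.

Lemma res_le_lipschitz I u v :
  sat_le I v -> res_le I u <= (\sum_(c <- I) norm1 c.1) * norm1 (u - v).
Proof.
move=> /allP vI; rewrite /res_le mulr_suml big_seq [leRHS]big_seq.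
apply: ler_sum => c cI; rewrite ge_max mulr_ge0 ?norm1_ge0 //=.
apply: le_trans (_ : dotv c.1 u - dotv c.1 v <= _); first by rewrite lerD2l lerN2 vI.
exact: le_trans (ler_norm _) (dotv_lipschitz _ _ _).
Qed.

Definition feasible I E := exists w, sat_le I w && sat_eq E w.

Definition error_bound k I E := forall u,
  exists2 v, sat_le I v && sat_eq E v & norm1 (u - v) <= k * (res_le I u + res_eq E u).

Definition hoffman_constant (Ale Aeq : seq vec) k := 0 <= k /\
  forall I E, map fst I = Ale -> map fst E = Aeq -> feasible I E -> error_bound k I E.

Lemma feasible_le_behead c I E : feasible (c :: I) E -> feasible I E.
Proof. by case=> w; rewrite sat_le_cons => /andP[/andP[_ wI] wE]; exists w; rewrite wI wE. Qed.

Lemma feasible_eq_behead c I E : feasible I (c :: E) -> feasible I E.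
Proof. by case=> w; rewrite sat_eq_cons => /and3P[wI _ wE]; exists w; rewrite wI wE. Qed.

(* The constant of one induction step of Hoffman's bound: reach the system
   without the constraint c at cost k1 times the residual, then correct for c at
   cost k2 times its violation t there. *)
Lemma two_step_error_le (k1 k2 n N N' r s t : R) :
  0 <= k1 -> 0 <= k2 -> 0 <= n -> 0 <= r -> 0 <= s ->
  N <= k1 * s -> t <= n * N + r -> N' <= N + k2 * t ->
  N' <= (k1 + k2 * (n * k1 + 1)) * (r + s).
Proof.
move=> k10 k20 n0 r0 s0 hN ht hN'.
have h1 : k2 * t <= k2 * (n * N + r) by exact: ler_wpM2l.
have h2 : k2 * n * N <= k2 * n * (k1 * s) by rewrite ler_wpM2l ?mulr_ge0.
have h3 : 0 <= k2 * n * k1 * r by rewrite !mulr_ge0.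
have h4 : 0 <= k1 * r by rewrite mulr_ge0.
have h5 : 0 <= k2 * s by rewrite mulr_ge0.
nra.
Qed.

Definition in_kernel (A : seq vec) e := all (fun b => dotv b e == 0) A.

Lemma kernel_dichotomy (A : seq vec) a :
  (exists2 e, in_kernel A e & dotv a e = 1) \/ (forall e, in_kernel A e -> dotv a e = 0).
Proof.
case: (classic (exists e, in_kernel A e /\ dotv a e != 0)) => [[e [Ae ae]]|none].
  left; exists ((dotv a e)^-1 *: e); last by rewrite dotvZ mulVf.
  by apply/allP => b bA; rewrite dotvZ (eqP (allP Ae b bA)) mulr0.
by right=> e Ae; apply/eqP/negPn/negP => ae; apply: none; exists e.
Qed.

Lemma sat_eq_sub_kernel E v w : sat_eq E v -> sat_eq E w -> in_kernel (map fst E) (v - w).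
Proof.
move=> /allP vE /allP wE; rewrite /in_kernel all_map; apply/allP => c cE /=.
by rewrite dotvB (eqP (vE c cE)) (eqP (wE c cE)) subrr.
Qed.

Lemma error_bound_eq_cons_direction k c E e :
  0 <= k -> error_bound k [::] E -> in_kernel (map fst E) e -> dotv c.1 e = 1 ->
  error_bound (k + norm1 e * (norm1 c.1 * k + 1)) [::] (c :: E).
Proof.
move=> k0 hE /allP Ee ce u; have [v' /andP[_ v'E] v'u] := hE u.
set t := dotv c.1 v' - c.2.
exists (v' - t *: e).
  rewrite sat_eq_cons dotvB dotvZ ce mulr1 /t subKr eqxx /=.
  apply/allP => b bE; rewrite dotvB dotvZ (eqP (Ee b.1 (map_f _ bE))) mulr0 subr0.
  exact: (allP v'E).
rewrite /res_le big_nil add0r in v'u; rewrite /res_le big_nil add0r res_eq_cons.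
apply: (two_step_error_le (N := norm1 (u - v')) (t := `|t|)) => //;
  rewrite ?norm1_ge0 ?res_eq_ge0 //.
- have -> : t = (dotv c.1 v' - dotv c.1 u) + (dotv c.1 u - c.2) by rewrite addrA subrK.
  apply: le_trans (ler_normD _ _) _; rewrite lerD2r norm1_distC.
  exact: dotv_lipschitz.
- rewrite mulrC -norm1Z; apply: le_trans (norm1D _ _).
  by rewrite opprB addrA addrAC.
Qed.

Lemma error_bound_eq_cons_implied k c E :
  0 <= k -> (forall e, in_kernel (map fst E) e -> dotv c.1 e = 0) ->
  feasible [::] (c :: E) -> error_bound k [::] E -> error_bound k [::] (c :: E).
Proof.
move=> k0 ker [w]; rewrite sat_eq_cons => /and3P[_ wc wE] hE u.
have [v /andP[_ vE] vu] := hE u.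
have vc : dotv c.1 v == c.2.
  by rewrite -(eqP wc) -subr_eq0 -dotvB ker // sat_eq_sub_kernel.
exists v; first by rewrite sat_eq_cons vc vE.
by apply: le_trans vu _; rewrite res_eq_cons ler_wpM2l // lerD2l lerDr.
Qed.

Lemma hoffman_eq (Aeq : seq vec) : exists k, hoffman_constant [::] Aeq k.
Proof.
elim: Aeq => [|a A [k [k0 hk]]].
  exists 0; split=> // [] [|//] [|//] _ _ _ u.
  by exists u; rewrite ?subrr ?norm10 ?mul0r.
have [[e Ae ae]|ker] := kernel_dichotomy A a.
  exists (k + norm1 e * (norm1 a * k + 1)); split.
    by rewrite addr_ge0 // mulr_ge0 ?norm1_ge0 // addr_ge0 // mulr_ge0 ?norm1_ge0.
  move=> [|//] [|c E] //= _ [ca EE] feas; rewrite -ca.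
  by apply: error_bound_eq_cons_direction; rewrite ?EE ?ca //; apply: hk (feasible_eq_behead feas).
exists k; split=> // [] [|//] [|c E] //= _ [ca EE] feas.
apply: error_bound_eq_cons_implied => //; first by rewrite EE ca.
exact: hk (feasible_eq_behead feas).
Qed.

Lemma feasible_boundary c I E v w :
  sat_le I v -> sat_eq E v -> sat_le (c :: I) w -> sat_eq E w -> c.2 < dotv c.1 v ->
  feasible I (c :: E).
Proof.
move=> /allP vI /allP vE /andP[wc /allP wI] /allP wE cv.
set g := dotv c.1 v - dotv c.1 w.
have g0 : 0 < g by rewrite subr_gt0 (le_lt_trans wc cv).
set l := (dotv c.1 v - c.2) / g.
have l0 : 0 <= l by rewrite /l divr_ge0 ?ltW // subr_gt0.
have l1 : l <= 1 by rewrite /l ler_pdivrMr // mul1r lerD2l lerN2.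
exists ((1 - l) *: v + l *: w); apply/and3P; split.
- apply/allP => b bI; rewrite dotv_comb.
  have l1' : 0 <= 1 - l by rewrite subr_ge0.
  have := ler_wpM2l l0 (wI b bI); have := ler_wpM2l l1' (vI b bI); lra.
- rewrite dotv_comb; apply/eqP.
  have -> : (1 - l) * dotv c.1 v + l * dotv c.1 w = dotv c.1 v - l * g by rewrite /g; ring.
  by rewrite /l divfK ?gt_eqF // subKr.
- apply/allP => b bE; rewrite dotv_comb (eqP (vE b bE)) (eqP (wE b bE)).
  by rewrite -mulrDl subrK mul1r.
Qed.

Lemma error_bound_le_cons k1 k2 c I E :
  0 <= k1 -> 0 <= k2 -> feasible (c :: I) E -> error_bound k1 I E ->
  (feasible I (c :: E) -> error_bound k2 I (c :: E)) ->
  error_bound (k1 + k2 * (norm1 c.1 * k1 + 1)) (c :: I) E.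
Proof.
move=> k10 k20 [w /andP[wcI wE]] h1 h2 u; have [v' /andP[v'I v'E] v'u] := h1 u.
have m0 : 0 <= Num.max 0 (dotv c.1 u - c.2) by rewrite le_max lexx.
rewrite res_le_cons -addrA.
have [v'c|cv'] := leP (dotv c.1 v') c.2.
  exists v'; first by rewrite sat_le_cons v'c v'I v'E.
  apply: le_trans v'u _; apply: ler_pM; rewrite ?addr_ge0 ?res_le_ge0 ?res_eq_ge0 //.
    by rewrite lerDl mulr_ge0 // addr_ge0 // mulr_ge0 ?norm1_ge0.
  by rewrite lerDr.
have feas := feasible_boundary v'I v'E wcI wE cv'.
have [v] := h2 feas v'; rewrite sat_eq_cons => /and3P[vI vc vE] vv'.
exists v; first by rewrite sat_le_cons (eqP vc) lexx vI vE.
rewrite res_le0 // res_eq_cons res_eq0 // add0r addr0 gtr0_norm ?subr_gt0 // in vv'.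
apply: (two_step_error_le (N := norm1 (u - v')) (t := dotv c.1 v' - c.2)) => //;
  rewrite ?norm1_ge0 ?addr_ge0 ?res_le_ge0 ?res_eq_ge0 //.
- have -> : dotv c.1 v' - c.2 = (dotv c.1 v' - dotv c.1 u) + (dotv c.1 u - c.2).
    by rewrite addrA subrK.
  apply: lerD; last by rewrite le_max lexx orbT.
  by rewrite norm1_distC; apply: le_trans (ler_norm _) (dotv_lipschitz _ _ _).
- have -> : u - v = (u - v') + (v' - v) by rewrite addrA subrK.
  by apply: le_trans (norm1D _ _) _; rewrite lerD2l.
Qed.

Lemma hoffman (Ale Aeq : seq vec) : exists k, hoffman_constant Ale Aeq k.
Proof.
elim: Ale Aeq => [|a A IH] Aeq.
  by have [k [k0 hk]] := hoffman_eq Aeq; exists k; split=> // [] [|//]; apply: hk.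
have [k1 [k10 hk1]] := IH Aeq; have [k2 [k20 hk2]] := IH (a :: Aeq).
exists (k1 + k2 * (norm1 a * k1 + 1)); split.
  by rewrite addr_ge0 // mulr_ge0 // addr_ge0 // mulr_ge0 ?norm1_ge0.
move=> [|c I] //= E [ca II] EE feas; rewrite -ca.
apply: error_bound_le_cons => //; first exact: hk1 (feasible_le_behead feas).
by apply: hk2 => //=; rewrite ca EE.
Qed.

Lemma midpoint_defect_le k I1 I2 x y p :
  0 <= k -> error_bound k (I1 ++ I2) [::] -> sat_le I1 x -> sat_le I2 y ->
  is_proj (fun u => sat_le (I1 ++ I2) u) (2^-1 *: (x + y)) p ->
  enorm (x + y - 2%:R *: p) <= k * (\sum_(c <- I1 ++ I2) norm1 c.1) * d%:R * enorm (x - y).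
Proof.
move=> k0 hk xI1 yI2 [_ pmin]; set z := 2^-1 *: (x + y).
set S := \sum_(c <- I1 ++ I2) norm1 c.1.
have S0 : 0 <= S by rewrite sumr_ge0 // => c _; apply: norm1_ge0.
have [q /andP[qI _] qz] := hk z.
have zx : z - x = 2^-1 *: (y - x) by apply/matrixP => i j; rewrite !mxE; field.
have zy : z - y = 2^-1 *: (x - y) by apply/matrixP => i j; rewrite !mxE; field.
have half_ge0 : 0 <= 2^-1 :> R by rewrite invr_ge0 ler0n.
have res_z : res_le (I1 ++ I2) z <= 2^-1 * S * norm1 (x - y).
  rewrite /res_le /S !big_cat mulrDr mulrDl; apply: lerD.
    apply: le_trans (res_le_lipschitz _ xI1) _.
    by rewrite zx norm1Z ger0_norm // norm1_distC mulrCA mulrA.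
  apply: le_trans (res_le_lipschitz _ yI2) _.
  by rewrite zy norm1Z ger0_norm // mulrCA mulrA.
have -> : x + y - 2%:R *: p = 2%:R *: (z - p).
  by apply/matrixP => i j; rewrite !mxE; field.
rewrite enormZ ger0_norm //.
have zp : enorm (z - p) <= k * (2^-1 * S * norm1 (x - y)).
  apply: le_trans (pmin q qI) _; apply: le_trans (enorm_le_norm1 _) _.
  by apply: le_trans qz _; rewrite /res_eq big_nil addr0 ler_wpM2l.
apply: le_trans (ler_wpM2l (ler0n _ 2) zp) _.
have -> : 2%:R * (k * (2^-1 * S * norm1 (x - y))) = k * S * norm1 (x - y) by field.
by rewrite -[leRHS]mulrA ler_wpM2l ?mulr_ge0 // norm1_le_enorm.
Qed.

Lemma polyhedral_sat_le (C : vec -> Prop) :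
  polyhedral C -> exists I, forall v, C v <-> sat_le I v.
Proof.
case=> m [A [b HC]]; exists [seq (\col_j A i j, b i 0) | i <- enum 'I_m] => v.
have rowE i : dotv (\col_j A i j) v = (A *m v) i 0.
  by rewrite /dotv mxE; apply: eq_bigr => j _; rewrite mxE.
rewrite HC /sat_le all_map; split=> [Av | /allP Av i].
  by apply/allP => i _ /=; rewrite rowE.
by have := Av i; rewrite mem_enum /= rowE; apply.
Qed.

End HoffmanBound.

Theorem lemma1 (R : realType) (d : nat) (C1 C2 : 'cV[R]_d -> Prop) :
  polyhedral C1 -> polyhedral C2 ->
  (exists z, C1 z /\ C2 z) ->
  exists M : R, 0 < M /\
    forall (x y p1 p2 p : 'cV[R]_d),
      C1 x -> C2 y ->
      is_proj C1 x p1 -> is_proj C2 y p2 ->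
      is_proj (fun u => C1 u /\ C2 u) ((2 : R)^-1 *: (x + y)) p ->
      enorm (p1 + p2 - 2%:R *: p) <= M * enorm (p1 - p2).
Proof.
move=> /polyhedral_sat_le[I1 C1E] /polyhedral_sat_le[I2 C2E] [z [z1 z2]].
have C12E u : C1 u /\ C2 u <-> sat_le (I1 ++ I2) u.
  by rewrite sat_le_cat; split=> [[/C1E -> /C2E ->] | /andP[/C1E ? /C2E ?]].
have [k [k0 /(_ (I1 ++ I2) [::] erefl erefl) hk]] := hoffman (map fst (I1 ++ I2)) [::].
have {}hk : error_bound k (I1 ++ I2) [::] by apply: hk; exists z; rewrite andbT -C12E.
set S := \sum_(c <- I1 ++ I2) norm1 c.1.
have S0 : 0 <= S by rewrite sumr_ge0 // => c _; apply: norm1_ge0.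
exists (k * S * d%:R + 1); split; first by rewrite ltr_pwDr // !mulr_ge0.
move=> x y p1 p2 p x1 y2 /(is_proj_id x1) -> /(is_proj_id y2) -> /(is_proj_ext C12E) pI.
apply: le_trans (midpoint_defect_le k0 hk _ _ pI) _; [exact/C1E | exact/C2E |].
by rewrite ler_wpM2r ?enorm_ge0 // lerDl.
Qed.
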